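(* Consider a heterogeneous graph whose nodes are the rows of $K$ tables $\mathbf{T}^1,\dots,\mathbf{T}^K$ (node type $=$ table), with edges given by primary-key/foreign-key relations, and let $H\ge 1$. Fix a table $k$ and a column $j$ of $\mathbf{T}^k$, and initialize scalar node embeddings by $\mu^{(0)}_v = t^k_{i'j}$ if $v$ is row $i'$ of table $k$, and $\mu^{(0)}_v=0$ if $v$ is a row of any table $k'\neq k$. Fix a length-$H$ meta-path $\rho_H$ that traverses each table at most once, and for $h=0,\dots,H-1$ update $$\mu_v^{(h+1)} = \sigma\Big(w_0^{(h)}\mu_v^{(h)} + \operatorname{agg}\big[\{w^{(h)}\mu_u^{(h)}\}_{u\in\mathcal{N}_v^{(h)}}\big]\Big),$$ where $\mathcal{N}_v^{(h)}$ is the set of neighbors of $v$ along the (single) edge type of step $h$ of $\rho_H$, $\operatorname{agg}$ is a permutation-invariant aggregation function and $\sigma:\mathbb{R}\to\mathbb{R}$ is an activation. If $\sigma$ and $\operatorname{agg}$ are positively homogeneous functions and $w_0^{(h)}, w^{(h)}\in\mathbb{R}_+$ for all $h$, then without loss of generality this update scheme can be reparameterized with no internal weights (i.e., the weights can be pulled out of the composition so that the output embeddings equal a nonnegative overall scale factor times the embeddings produced by the same scheme with all weights $w_0^{(h)}, w^{(h)}$ set to $1$).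
   Context: A meta-path of length $H$ is a sequence of $H$ edge types (PK–FK relations) connecting properly typed nodes. A function $f$ is positively homogeneous if $f(c\,x)=c\,f(x)$ for all $c\ge 0$ (for $\operatorname{agg}$, applied to the multiset of scaled inputs). A node with no neighbors at step $h$ has $\mathcal{N}_v^{(h)}=\emptyset$, in which case the aggregation term is absent. *)

From HB Require Import structures.
From mathcomp Require Import all_boot all_order all_algebra.
From mathcomp Require Import reals.
Set Implicit Arguments. Unset Strict Implicit. Unset Printing Implicit Defensive.
Import Order.TTheory GRing.Theory Num.Theory.
Local Open Scope ring_scope.

(* Table i has
   n i rows and m i columns, T i : 'M[R]_(n i, m i).  A node is a pair
   (table index, row index); its node type is its table (tag). *)
Definition node (K : nat) (n : 'I_K -> nat) : finType := {i : 'I_K & 'I_(n i)}.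

Definition init_emb (R : nzRingType) (K : nat) (n m : 'I_K -> nat)
  (T : forall i : 'I_K, 'M[R]_(n i, m i)) (k : 'I_K) (j : 'I_(m k))
  (v : node n) : R :=
  match @eqP _ (tag v) k with
  | ReflectT e => T k (cast_ord (congr1 n e) (tagged v)) j
  | ReflectF _ => 0
  end.

Definition pos_homogeneous (R : realType) (f : R -> R) : Prop :=
  forall c x : R, 0 <= c -> f (c * x) = c * f x.

(* For agg, applied to the multiset (here: list, agg being permutation
   invariant) of scaled inputs. *)
Definition agg_pos_homogeneous (R : realType) (agg : seq R -> R) : Prop :=
  forall (c : R) (s : seq R), 0 <= c -> agg [seq c * x | x <- s] = c * agg s.

Definition perm_invariant (R : realType) (agg : seq R -> R) : Prop :=
  forall s t : seq R, perm_eq s t -> agg s = agg t.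

Fixpoint emb (R : realType) (V : finType) (sigma : R -> R) (agg : seq R -> R)
  (N : nat -> V -> {set V}) (w0 w : nat -> R) (mu0 : V -> R) (h : nat) : V -> R :=
  match h with
  | 0 => mu0
  | h'.+1 => fun v =>
      let mu := emb sigma agg N w0 w mu0 h' in
      if N h' v == set0 then sigma (w0 h' * mu v)
      else sigma (w0 h' * mu v + agg [seq w h' * mu u | u <- enum (N h' v)])
  end.

From HB Require Import structures.
From mathcomp Require Import all_boot all_order all_algebra.
From mathcomp Require Import reals zify.
Set Implicit Arguments. Unset Strict Implicit. Unset Printing Implicit Defensive.
Import Order.TTheory GRing.Theory Num.Theory.
Local Open Scope ring_scope.

(* The signal starts on table k = a q0 and, since step h only links tables
   a h and a h.+1, after h steps it sits on table a (maxn h q0) alone.  On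
   that table only one of the two weighted terms of the update can be
   nonzero, so by homogeneity each step contributes a single nonnegative
   factor, w0 h or w h, to the overall scale.  If k is off the meta-path,
   the output table stays zero and c = 0 works. *)

Lemma pos_homogeneous0 (R : realType) (f : R -> R) :
  pos_homogeneous f -> f 0 = 0.
Proof. by move=> f_hom; have := f_hom 0 0 (lexx 0); rewrite !mul0r. Qed.

Lemma agg_pos_homogeneous_eq0 (R : realType) (agg : seq R -> R) (s : seq R) :
  agg_pos_homogeneous agg -> {in s, forall x, x = 0} -> agg s = 0.
Proof.
move=> agg_hom s0; have -> : s = [seq 0 * x | x <- s].
  by rewrite -[LHS]map_id; apply/eq_in_map => x /s0 ->; rewrite mul0r.
by rewrite agg_hom // mul0r.
Qed.

Lemma init_emb_off (R : nzRingType) (K : nat) (n m : 'I_K -> nat)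
    (T : forall i : 'I_K, 'M[R]_(n i, m i)) (k : 'I_K) (j : 'I_(m k))
    (v : node n) :
  tag v != k -> init_emb T j v = 0.
Proof. by rewrite /init_emb; case: eqP => // ->; rewrite eqxx. Qed.

Section Layer.

Variables (R : realType) (V : finType) (sigma : R -> R) (agg : seq R -> R).
Hypotheses (sigma_hom : pos_homogeneous sigma)
  (agg_hom : agg_pos_homogeneous agg).

Definition layer (Nh : V -> {set V}) (b0 b : R) (mu : V -> R) (v : V) : R :=
  sigma (b0 * mu v + agg [seq b * mu u | u <- enum (Nh v)]).

(* Homogeneity forces [agg [::] = 0], so the case split on an empty
   neighbourhood in [emb] is immaterial. *)
Lemma embS (N : nat -> V -> {set V}) (w0 w : nat -> R) (mu0 : V -> R) h v :
  emb sigma agg N w0 w mu0 h.+1 v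
  = layer (N h) (w0 h) (w h) (emb sigma agg N w0 w mu0 h) v.
Proof.
rewrite /= /layer; case: eqP => // ->.
by rewrite enum_set0 /= (@agg_pos_homogeneous_eq0 _ _ [::]) ?addr0.
Qed.

Variable Nh : V -> {set V}.

Lemma agg_nbr_eq0 (b : R) (mu : V -> R) v :
  {in Nh v, forall u, mu u = 0} -> agg [seq b * mu u | u <- enum (Nh v)] = 0.
Proof.
move=> mu0; apply: agg_pos_homogeneous_eq0 => // x /mapP[u].
by rewrite mem_enum => /mu0 -> ->; rewrite mulr0.
Qed.

Lemma layer_eq0 (b0 b : R) (mu : V -> R) v :
  mu v = 0 -> {in Nh v, forall u, mu u = 0} -> layer Nh b0 b mu v = 0.
Proof.
move=> mu_v0 mu_N0.
by rewrite /layer mu_v0 mulr0 add0r agg_nbr_eq0 // pos_homogeneous0.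
Qed.

Lemma layer_scale_self (b0 b c : R) (mu mu' : V -> R) v :
    0 <= b0 -> 0 <= c -> mu v = c * mu' v ->
    {in Nh v, forall u, mu u = 0} -> {in Nh v, forall u, mu' u = 0} ->
  layer Nh b0 b mu v = (b0 * c) * layer Nh 1 1 mu' v.
Proof.
move=> b0_ge0 c_ge0 mu_v mu_N0 mu'_N0.
rewrite /layer !agg_nbr_eq0 // !addr0 mu_v mul1r mulrA.
by rewrite sigma_hom // mulr_ge0.
Qed.

Lemma layer_scale_nbr (b0 b c : R) (mu mu' : V -> R) v :
    0 <= b -> 0 <= c -> mu v = 0 -> mu' v = 0 ->
    {in Nh v, forall u, mu u = c * mu' u} ->
  layer Nh b0 b mu v = (b * c) * layer Nh 1 1 mu' v.
Proof.
move=> b_ge0 c_ge0 mu_v0 mu'_v0 mu_N.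
rewrite /layer mu_v0 mu'_v0 !mulr0 !add0r.
have -> : [seq b * mu u | u <- enum (Nh v)]
          = [seq (b * c) * x | x <- [seq 1 * mu' u | u <- enum (Nh v)]].
  rewrite -map_comp; apply/eq_in_map => u /=.
  by rewrite mem_enum => /mu_N ->; rewrite mul1r mulrA.
by rewrite agg_hom ?sigma_hom ?mulr_ge0.
Qed.

End Layer.

Section MetaPath.

Variables (R : realType) (K : nat) (n m : 'I_K -> nat)
  (T : forall i : 'I_K, 'M[R]_(n i, m i)) (k : 'I_K) (j : 'I_(m k))
  (H : nat) (a : nat -> 'I_K) (N : nat -> node n -> {set node n})
  (sigma : R -> R) (agg : seq R -> R).

Hypothesis a_inj :
  forall h1 h2, (h1 <= H)%N -> (h2 <= H)%N -> a h1 = a h2 -> h1 = h2.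
Hypothesis N_tag : forall h u v, (h < H)%N -> u \in N h v ->
  (tag u = a h /\ tag v = a h.+1) \/ (tag u = a h.+1 /\ tag v = a h).
Hypotheses (sigma_hom : pos_homogeneous sigma)
  (agg_hom : agg_pos_homogeneous agg).

Local Notation mu b0 b := (emb sigma agg N b0 b (init_emb T j)).
Local Notation mu1 := (mu (fun=> 1) (fun=> 1)).

Lemma nbr_tag h q u v : (h < H)%N -> (q <= H)%N -> u \in N h v ->
  tag v = a q -> (q = h.+1 /\ tag u = a h) \/ (q = h /\ tag u = a h.+1).
Proof.
move=> hH qH uN tv.
have [[tu tv'] | [tu tv']] := N_tag hH uN; [left | right];
  by split=> //; apply: a_inj; rewrite -?tv -?tv' //; lia.
Qed.

Variable q0 : nat.
Hypothesis k_only_at_q0 : forall q, (q <= H)%N -> q != q0 -> a q != k.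

Lemma emb_eq0_unreached (b0 b : nat -> R) h q v :
    (h <= H)%N -> (q <= H)%N -> q != q0 -> (h < maxn q q0)%N ->
    tag v = a q ->
  mu b0 b h v = 0.
Proof.
elim: h q v => [|h IH] q v hH qH qq0 hq tv.
  by rewrite /= init_emb_off // tv k_only_at_q0.
rewrite (embS _ agg_hom); apply: (layer_eq0 sigma_hom agg_hom) => [|u uN].
  by apply: (IH q) => //; lia.
have [[eq_q tu] | [eq_q tu]] := nbr_tag hH qH uN tv; subst q.
  by apply: (IH h) => //; lia.
by apply: (IH h.+1) => //; lia.
Qed.

Lemma emb_scale_active (w0 w : nat -> R) :
    (q0 <= H)%N -> (forall h, (h < H)%N -> 0 <= w0 h /\ 0 <= w h) ->
  forall h, (h <= H)%N -> exists2 c : R, 0 <= c &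
    forall v, tag v = a (maxn h q0) -> mu w0 w h v = c * mu1 h v.
Proof.
move=> q0H w_ge0; elim=> [|h IH] hH; first by exists 1 => // v _; rewrite mul1r.
have [c c_ge0 Hc] := IH (ltnW hH).
have [w0h_ge0 wh_ge0] := w_ge0 h hH.
have [hq0 | q0h] := ltnP h q0.
- exists (w0 h * c) => [|v]; first exact: mulr_ge0.
  rewrite (maxn_idPr hq0) => tv.
  have nbr0 b0 b : {in N h v, forall u, mu b0 b h u = 0}.
    move=> u uN; have [[_ tu] | [eq_q _]] := nbr_tag hH q0H uN tv; last lia.
    by apply: (emb_eq0_unreached _ _ (q := h)) => //; lia.
  rewrite !(embS _ agg_hom); apply: (layer_scale_self sigma_hom agg_hom) => //.
  by apply: Hc; rewrite (maxn_idPr (ltnW hq0)).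
- exists (w h * c) => [|v]; first exact: mulr_ge0.
  rewrite (maxn_idPl (leqW q0h)) => tv.
  have self0 b0 b : mu b0 b h v = 0.
    by apply: (emb_eq0_unreached _ _ (q := h.+1)) => //; lia.
  rewrite !(embS _ agg_hom).
  apply: (layer_scale_nbr sigma_hom agg_hom) => // u uN.
  have [[_ tu] | [eq_q _]] := nbr_tag hH hH uN tv; last lia.
  by apply: Hc; rewrite (maxn_idPl q0h).
Qed.

End MetaPath.

Theorem proposition3p2
  (R : realType) (K : nat) (n m : 'I_K -> nat)
  (T : forall i : 'I_K, 'M[R]_(n i, m i)) (k : 'I_K) (j : 'I_(m k))
  (H : nat) (a : nat -> 'I_K) (N : nat -> node n -> {set node n})
  (sigma : R -> R) (agg : seq R -> R) (w0 w : nat -> R) :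
  (0 < H)%N ->
  (* the meta-path visits tables a 0, ..., a H, each at most once *)
  (forall h1 h2, (h1 <= H)%N -> (h2 <= H)%N -> a h1 = a h2 -> h1 = h2) ->
  (* neighbours along the edge type of step h connect tables a h and a h.+1 *)
  (forall h u v, (h < H)%N -> u \in N h v ->
     (tag u = a h /\ tag v = a h.+1) \/ (tag u = a h.+1 /\ tag v = a h)) ->
  perm_invariant agg ->
  pos_homogeneous sigma ->
  agg_pos_homogeneous agg ->
  (forall h, (h < H)%N -> 0 <= w0 h /\ 0 <= w h) ->
  exists c : R, 0 <= c /\
    forall v : node n, tag v = a H ->
      emb sigma agg N w0 w (init_emb T j) H v
      = c * emb sigma agg N (fun _ => 1) (fun _ => 1) (init_emb T j) H v.
Proof.
move=> _ a_inj N_tag _ sigma_hom agg_hom w_ge0.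
have [/existsP[q /eqP aq] | /existsPn k_off] :=
  boolP [exists q : 'I_H.+1, a q == k].
- have qH : (q <= H)%N by rewrite -ltnS.
  have k_only q' : (q' <= H)%N -> q' != q -> a q' != k.
    by move=> q'H; apply: contra_neq => aq'; apply: a_inj; rewrite ?aq.
  have [c c_ge0 Hc] := emb_scale_active T j a_inj N_tag sigma_hom agg_hom
    k_only qH w_ge0 (leqnn H).
  by exists c; split=> // v tv; apply: Hc; rewrite (maxn_idPl qH).
- have k_only q : (q <= H)%N -> q != H.+1 -> a q != k.
    by move=> qH _; exact: (k_off (Ordinal (qH : (q < H.+1)%N))).
  exists 0; split=> // v tv; rewrite mul0r.
  apply: (emb_eq0_unreached T j a_inj N_tag sigma_hom agg_hom k_only
    _ _ (leqnn H) (leqnn H)) => //; lia.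
Qed.
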